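(* Let $\Sigma\subset\mathbb R^d$ be a bounded open set containing $0$. Then: (a) for each $x\in\mathbb R^d\setminus\{0\}$ the limit $R_\Sigma(x):=\lim_{\varepsilon\searrow0}\big(\int_\varepsilon^{+\infty}\frac{d\mu}{\mu}1_\Sigma(\mu x)+\ln\varepsilon\big)$ exists; (b) the even function $G_\Sigma:\mathbb R^d\setminus\{0\}\to\mathbb R$, $G_\Sigma(x)=\tfrac12[R_\Sigma(x)+R_\Sigma(-x)]$, satisfies $G_\Sigma(x)=G_\Sigma\big(\frac{x}{|x|}\big)-\ln|x|$; (c) if $\Sigma$ is star-shaped with respect to $0$, then $G_\Sigma(\omega)=\tfrac12[\ln\ell_\Sigma(\omega)+\ln\ell_\Sigma(-\omega)]$ for each $\omega\in S^{d-1}$.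
   Context: $1_\Sigma$ is the characteristic function of $\Sigma$. For an open set $\Sigma$ star-shaped with respect to $0$, $\ell_\Sigma:S^{d-1}\to\,]0,\infty[$ is defined by $\ell_\Sigma(\omega)=\sup\{\mu\ge0:\mu\omega\in\Sigma\}$. *)

From HB Require Import structures.
From mathcomp Require Import all_boot all_order all_algebra.
From mathcomp Require Import all_classical all_reals all_analysis.
Set Implicit Arguments. Unset Strict Implicit. Unset Printing Implicit Defensive.
Import Order.TTheory GRing.Theory Num.Theory.
Import numFieldNormedType.Exports.
Local Open Scope classical_set_scope.
Local Open Scope ring_scope.

(* Euclidean norm |x| on R^d (the canonical norm of 'rV is the max norm). *)
Definition enorm (R : realType) (d : nat) (x : 'rV[R]_d) : R :=
  Num.sqrt (\sum_(i < d) x ord0 i ^+ 2).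

Definition trunc_int (R : realType) (d : nat) (Sigma : set 'rV[R]_d)
  (x : 'rV[R]_d) (eps : R) : \bar R :=
  (\int[@lebesgue_measure R]_(mu in `[eps, +oo[) (mu^-1 * \1_Sigma (mu *: x))%:E)%E.

Definition RS_approx (R : realType) (d : nat) (Sigma : set 'rV[R]_d)
  (x : 'rV[R]_d) (eps : R) : \bar R :=
  (trunc_int Sigma x eps + (ln eps)%:E)%E.

Definition RS (R : realType) (d : nat) (Sigma : set 'rV[R]_d) (x : 'rV[R]_d) : R :=
  fine (lim (RS_approx Sigma x eps @[eps --> 0^'+])).

Definition GS (R : realType) (d : nat) (Sigma : set 'rV[R]_d) (x : 'rV[R]_d) : R :=
  (RS Sigma x + RS Sigma (- x)) / 2.

Definition star_shaped0 (R : realType) (d : nat) (Sigma : set 'rV[R]_d) : Prop :=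
  forall x, Sigma x -> forall t : R, 0 <= t <= 1 -> Sigma (t *: x).

Definition ellS (R : realType) (d : nat) (Sigma : set 'rV[R]_d) (w : 'rV[R]_d) : R :=
  sup [set mu : R | 0 <= mu /\ Sigma (mu *: w)].

From HB Require Import structures.
From mathcomp Require Import all_boot all_order all_algebra.
From mathcomp Require Import all_classical all_reals all_analysis.
From mathcomp Require Import measurable_realfun ring lra.
Set Implicit Arguments.
Unset Strict Implicit.
Unset Printing Implicit Defensive.

Import Order.TTheory GRing.Theory Num.Theory.
Import numFieldNormedType.Exports.
Local Open Scope classical_set_scope.
Local Open Scope ring_scope.

(* Write [h_x(t) = t^-1 1_Sigma(t x)].  As Sigma is an open neighbourhood of 0,
   [h_x(t) = 1/t] on some []0, delta]], and as Sigma is bounded, [h_x] vanishes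
   for large [t].  So for [eps < delta] the approximant equals
   [ln delta + int_delta^oo h_x]: it is constant near 0, which gives (a).
   The dilation [t = r s] maps [int_eps^oo h_(r x)] to [int_(r eps)^oo h_x],
   hence [R_Sigma(r x) = R_Sigma(x) - ln r], which gives (b).  For a
   star-shaped Sigma, [h_w(t) = 1/t] exactly on []0, ell(w)[] and [h_w]
   vanishes beyond, so [R_Sigma(w) = ln ell(w)], which gives (c). *)

Section half_line_integrals.
Context {R : realType}.
Local Notation mu := (@lebesgue_measure R).

Lemma measurable_fun_inv_gt0 : measurable_fun (`]0, +oo[ : set R) GRing.inv.
Proof.
apply: open_continuous_measurable_fun; first exact: interval_open.
move=> t; rewrite inE/= in_itv/= andbT => t0.
by apply: inv_continuous; rewrite gt_eqF.
Qed.

Lemma measurable_fun_itv_gt0 (f : R -> R) (a : R) (b : itv_bound R) : 0 < a ->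
  measurable_fun (`]0, +oo[ : set R) f ->
  measurable_fun [set` Interval (BLeft a) b] (EFin \o f).
Proof.
move=> a0 mf; apply/measurable_EFinP; apply: measurable_funS mf => // t /=.
by rewrite !in_itv/= andbT => /andP[/(lt_le_trans a0)].
Qed.

Lemma integral_inv_itv (a b : R) : 0 < a -> a <= b ->
  (\int[mu]_(t in `[a, b[) (t^-1)%:E = (ln b - ln a)%:E)%E.
Proof.
move=> a0; rewrite le_eqVlt => /predU1P[<-|ab].
  by rewrite set_itv_ge ?integral_set0 ?subrr// bnd_simp ltxx.
have ge_a_gt0 x : a <= x -> 0 < x by exact: lt_le_trans.
rewrite integral_itv_bndo_bndc; last exact: measurable_fun_itv_gt0 measurable_fun_inv_gt0.
rewrite EFinB (@continuous_FTC2 _ _ (@ln R))//.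
- apply: continuous_in_subspaceT => x; rewrite inE/= in_itv/= => /andP[/ge_a_gt0 xp _].
  by apply: inv_continuous; rewrite gt_eqF.
- split.
  + move=> x; rewrite in_itv/= => /andP[/ltW/ge_a_gt0 xp _].
    by have [] := is_derive1_ln xp.
  + exact/cvg_at_right_filter/continuous_ln.
  + exact/cvg_at_left_filter/continuous_ln/(lt_trans a0).
- move=> x; rewrite in_itv/= => /andP[/ltW/ge_a_gt0 xp _].
  by rewrite derive1E; apply: derive_val; exact: is_derive1_ln.
Qed.

Lemma ge0_integral_itv_split (f : R -> R) (a b : R) : 0 < a -> a <= b ->
  measurable_fun (`]0, +oo[ : set R) f -> (forall t, 0 < t -> 0 <= f t) ->
  (\int[mu]_(t in `[a, +oo[) (f t)%:E =
   \int[mu]_(t in `[a, b[) (f t)%:E + \int[mu]_(t in `[b, +oo[) (f t)%:E)%E.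
Proof.
move=> a0 ab mf f0.
rewrite (@itv_bndbnd_setU _ _ (BLeft a) (BLeft b) +oo%O) ?bnd_simp//.
apply: ge0_integral_setU => //.
- by rewrite -itv_bndbnd_setU ?bnd_simp//; exact: measurable_fun_itv_gt0.
- move=> t; rewrite -itv_bndbnd_setU ?bnd_simp//= in_itv/= andbT => aT.
  by rewrite lee_fin f0// (lt_le_trans a0).
- apply/disj_setPS => t [] /=; rewrite !in_itv/= andbT => /andP[_ tb] bt.
  by move: (lt_le_trans tb bt); rewrite ltxx.
Qed.

Lemma lebesgue_measure_dilation (r : R) (r0 : 0 < r) (A : set R) : measurable A ->
  mu A = (r%:E * pushforward mu ( *%R r : R -> measurableTypeR R) A)%E.
Proof.
apply: (@lebesgue_measure_unique R
  (mscale (NngNum (ltW r0)) (pushforward mu ( *%R r : R -> measurableTypeR R)))).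
move=> _ [[x1 x2] _ <-].
change (mu `]x1, x2] = (r%:E * mu (( *%R r) @^-1` `]x1, x2]))%E).
have -> : ( *%R r) @^-1` `]x1, x2] = `]x1 / r, x2 / r]%classic.
  by apply/seteqP; split => t /=; rewrite !in_itv/= ltr_pdivrMr// ler_pdivlMr//
    ![_ * r]mulrC.
rewrite !lebesgue_measure_itv/= !lte_fin ltr_pM2r ?invr_gt0//.
case: ifPn => _; last by rewrite mule0.
by rewrite -EFinM -EFinB; congr EFin; field; rewrite gt_eqF.
Qed.

Lemma ge0_integral_itv_dilation (r a : R) (g : R -> R) : 0 < r ->
  measurable_fun `[r * a, +oo[ (EFin \o g) -> (forall t, r * a <= t -> 0 <= g t) ->
  (\int[mu]_(t in `[a, +oo[) (g (r * t)%R)%:E =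
   (r^-1)%:E * \int[mu]_(t in `[(r * a)%R, +oo[) (g t)%:E)%E.
Proof.
move=> r0 mg g0.
set phi := ( *%R r : R -> measurableTypeR R).
have mphi : measurable_fun setT phi by exact: mulrl_measurable.
rewrite [in RHS](eq_measure_integral (mscale (NngNum (ltW r0)) (pushforward mu phi)));
  last by move=> A mA _; exact: lebesgue_measure_dilation.
rewrite ge0_integral_mscale//=; last first.
  by move=> t; rewrite /= in_itv/= andbT => /g0; rewrite lee_fin.
rewrite ge0_integral_pushforward//=; last first.
  by move=> t; rewrite inE /= in_itv/= andbT => /g0; rewrite lee_fin.
have -> : phi @^-1` `[r * a, +oo[ = `[a, +oo[%classic.
  by apply/seteqP; split => t /=; rewrite !in_itv/= !andbT ler_pM2l.
by rewrite muleA -EFinM mulVf ?gt_eqF// mul1e.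
Qed.

End half_line_integrals.

Section ray_integral.
Context {R : realType} {d : nat} (Sigma : set 'rV[R]_d).
Local Notation mu := (@lebesgue_measure R).

Definition ray_integrand (x : 'rV[R]_d) (t : R) : R := t^-1 * \1_Sigma (t *: x).

Lemma trunc_intE x e :
  trunc_int Sigma x e = (\int[mu]_(t in `[e, +oo[) (ray_integrand x t)%:E)%E.
Proof. by []. Qed.

Lemma ray_integrand_ge0 x t : 0 < t -> 0 <= ray_integrand x t.
Proof. by move=> t0; rewrite /ray_integrand mulr_ge0 // ?invr_ge0 ?ltW. Qed.

Lemma ray_integrand_dilation x r t :
  ray_integrand x (r * t) = r^-1 * ray_integrand (r *: x) t.
Proof. by rewrite /ray_integrand scalerA [t * r]mulrC invfM mulrA. Qed.

Lemma RS_approx_near_cst x c (eta : R) : 0 < eta ->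
  (forall e, 0 < e -> e < eta -> RS_approx Sigma x e = c%:E) ->
  RS_approx Sigma x e @[e --> 0^'+] --> c%:E /\ RS Sigma x = c.
Proof.
move=> eta0 approxE.
have cvg_c : RS_approx Sigma x e @[e --> 0^'+] --> c%:E.
  apply: cvg_near_cst; near=> e; apply: approxE.
  - by near: e; exact: nbhs_right_gt.
  - by near: e; exact: nbhs_right_lt.
by split; rewrite // /RS (cvg_lim _ cvg_c).
Unshelve. all: by end_near.
Qed.

Hypothesis Sigma_open : open Sigma.

Lemma open_ray x : open [set t : R | Sigma (t *: x)].
Proof. by apply: open_comp => // t _; exact: scalel_continuous. Qed.

Lemma measurable_ray_integrand x :
  measurable_fun (`]0, +oo[ : set R) (ray_integrand x).
Proof.
apply: measurable_funM; first exact: measurable_fun_inv_gt0.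
have -> : (fun t : R => \1_Sigma (t *: x) : R) = \1_[set t : R | Sigma (t *: x)].
  by apply/funext => t; rewrite !indicE.
by apply: measurable_indic; apply: open_measurable; exact: open_ray.
Qed.

Lemma integral_ray_integrand_inside x (a b : R) : 0 < a -> a <= b ->
  (forall t, a <= t < b -> Sigma (t *: x)) ->
  (\int[mu]_(t in `[a, b[) (ray_integrand x t)%:E = (ln b - ln a)%:E)%E.
Proof.
move=> a0 ab inS; rewrite -integral_inv_itv//.
apply: eq_integral => t; rewrite inE /= in_itv/= => /inS tS.
by rewrite /ray_integrand indicE mem_set ?mulr1.
Qed.

Lemma integral_ray_integrand_outside x (b : R) :
  (forall t, b <= t -> ~ Sigma (t *: x)) ->
  (\int[mu]_(t in `[b, +oo[) (ray_integrand x t)%:E = 0)%E.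
Proof.
move=> outS; apply: integral0_eq => t; rewrite /= in_itv/= andbT => /outS tS.
by rewrite /ray_integrand indicE memNset ?mulr0.
Qed.

Lemma trunc_int_dilation x r e : 0 < r -> 0 < e ->
  trunc_int Sigma (r *: x) e = trunc_int Sigma x (r * e).
Proof.
move=> r0 e0; have re0 : 0 < r * e by rewrite mulr_gt0.
rewrite !trunc_intE.
transitivity (r%:E * \int[mu]_(t in `[e, +oo[) (ray_integrand x (r * t))%:E)%E.
  under [in RHS]eq_integral => t _ do rewrite ray_integrand_dilation EFinM.
  rewrite ge0_integralZl_EFin ?invr_ge0 ?(ltW r0)//; last 2 first.
  - by move=> t; rewrite /= in_itv/= andbT lee_fin => /(lt_le_trans e0) /ray_integrand_ge0.
  - exact: measurable_fun_itv_gt0 (measurable_ray_integrand _).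
  by rewrite muleA -EFinM mulfV ?gt_eqF// mul1e.
rewrite ge0_integral_itv_dilation//; last 2 first.
- exact: measurable_fun_itv_gt0 (measurable_ray_integrand _).
- by move=> t /(lt_le_trans re0) /ray_integrand_ge0.
by rewrite muleA -EFinM mulfV ?gt_eqF// mul1e.
Qed.

Lemma RS_approx_dilation x r e : 0 < r -> 0 < e ->
  RS_approx Sigma (r *: x) e = (RS_approx Sigma x (r * e) - (ln r)%:E)%E.
Proof.
move=> r0 e0; rewrite /RS_approx trunc_int_dilation// lnM ?posrE//.
by rewrite EFinD [((ln r)%:E + _)%E]addeC addeA addeK.
Qed.

Hypothesis Sigma0 : Sigma 0.

Lemma ray_near0 x : exists2 delta : R, 0 < delta &
  forall t, 0 <= t <= delta -> Sigma (t *: x).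
Proof.
have : nbhs (0 : R) [set t : R | Sigma (t *: x)].
  by apply: open_nbhs_nbhs; split; [exact: open_ray | rewrite /= scale0r].
move=> /nbhs_ballP [e /= e0 ballS].
exists (e / 2); first by rewrite divr_gt0.
move=> t /andP[t0 te]; apply: ballS.
rewrite -ball_normE /= sub0r normrN ger0_norm//.
by rewrite (le_lt_trans te)// ltr_pdivrMr// ltr_pMr// ltr1n.
Qed.

Hypothesis Sigma_bounded : bounded_set Sigma.

Lemma ray_eventually_out x : x != 0 -> exists2 M : R, 0 < M &
  forall t, M <= t -> ~ Sigma (t *: x).
Proof.
move=> x0; have [M0 [_ boundS]] := Sigma_bounded.
have normS y : Sigma y -> `|y| <= `|M0| + 1.
  by apply: boundS; rewrite (le_lt_trans (ler_norm _))// ltrDl.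
have nx : 0 < `|x| by rewrite normr_gt0.
have M_gt0 : 0 < (`|M0| + 2) / `|x| by rewrite divr_gt0// ltr_wpDl.
exists ((`|M0| + 2) / `|x|) => // t Mt /normS.
rewrite normrZ gtr0_norm ?(lt_le_trans M_gt0)//.
move: Mt; rewrite ler_pdivrMr// => Mt tx.
have := le_trans Mt tx; lra.
Qed.

Lemma ray_tail_integral_fin_num x (delta : R) : x != 0 -> 0 < delta ->
  (\int[mu]_(t in `[delta, +oo[) (ray_integrand x t)%:E)%E \is a fin_num.
Proof.
move=> x0 delta0; have [M M0 outS] := ray_eventually_out x0.
have le_dM : delta <= M + delta by rewrite lerDr ltW.
rewrite ge0_fin_numE; last first.
  apply: integral_ge0 => t; rewrite /= in_itv/= andbT => dt.
  by rewrite lee_fin ray_integrand_ge0// (lt_le_trans delta0).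
rewrite (ge0_integral_itv_split delta0 le_dM (measurable_ray_integrand x));
  last exact: ray_integrand_ge0.
rewrite integral_ray_integrand_outside ?adde0; last first.
  by move=> t Mt; apply: outS; rewrite (le_trans _ Mt)// lerDl ltW.
apply: (@le_lt_trans _ _ (ln (M + delta) - ln delta)%:E); last exact: ltry.
rewrite -integral_inv_itv//.
apply: ge0_le_integral => //.
- move=> t; rewrite /= in_itv/= => /andP[/(lt_le_trans delta0) t0 _].
  by rewrite lee_fin ray_integrand_ge0.
- exact: measurable_fun_itv_gt0 (measurable_ray_integrand x).
- exact: measurable_fun_itv_gt0 measurable_fun_inv_gt0.
- move=> t; rewrite /= in_itv/= => /andP[/(lt_le_trans delta0) t0 _].
  rewrite lee_fin /ray_integrand indicE.
  by case: (_ \in _); rewrite ?mulr1 ?mulr0 ?invr_ge0 ?(ltW t0).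
Qed.

Lemma RS_approx_eventually_cst x : x != 0 -> exists c : R, exists2 eta : R,
  0 < eta & forall e, 0 < e -> e < eta -> RS_approx Sigma x e = c%:E.
Proof.
move=> x0; have [delta delta0 inS] := ray_near0 x.
have tail_fin := ray_tail_integral_fin_num x0 delta0.
set tail := (\int[mu]_(t in `[delta, +oo[) _)%E in tail_fin.
exists (ln delta + fine tail), delta => // e e0 e_lt.
rewrite /RS_approx trunc_intE.
rewrite (ge0_integral_itv_split e0 (ltW e_lt) (measurable_ray_integrand x));
  last exact: ray_integrand_ge0.
rewrite integral_ray_integrand_inside ?(ltW e_lt)//; last first.
  by move=> t /andP[et tdelta]; apply: inS; rewrite ltW ?(lt_le_trans e0)// ltW.
by rewrite -/tail -(fineK tail_fin) -!EFinD; congr EFin; ring.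
Qed.

Lemma RS_approx_cvg x : x != 0 ->
  exists l : R, RS_approx Sigma x e @[e --> 0^'+] --> l%:E.
Proof.
move=> /RS_approx_eventually_cst[c [eta eta0 approxE]].
by exists c; exact: (RS_approx_near_cst eta0 approxE).1.
Qed.

Lemma RS_dilation x r : x != 0 -> 0 < r -> RS Sigma (r *: x) = RS Sigma x - ln r.
Proof.
move=> x0 r0; have [c [eta eta0 approxE]] := RS_approx_eventually_cst x0.
rewrite (RS_approx_near_cst eta0 approxE).2.
have eta_r0 : 0 < eta / r by rewrite divr_gt0.
apply: (RS_approx_near_cst eta_r0 _).2 => e e0 e_lt.
by rewrite RS_approx_dilation// approxE ?mulr_gt0// mulrC -ltr_pdivlMr.
Qed.

Lemma GS_dilation x r : x != 0 -> 0 < r -> GS Sigma (r *: x) = GS Sigma x - ln r.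
Proof.
move=> x0 r0; rewrite /GS -scalerN !RS_dilation ?oppr_eq0//.
by field.
Qed.

End ray_integral.

Section star_shaped.
Context {R : realType} {d : nat} (Sigma : set 'rV[R]_d).
Hypotheses (Sigma_open : open Sigma) (Sigma_bounded : bounded_set Sigma)
  (Sigma0 : Sigma 0).
Local Notation ray w := [set t : R | 0 <= t /\ Sigma (t *: w)].

Lemma has_ubound_ray w : w != 0 -> has_ubound (ray w).
Proof.
move=> /(ray_eventually_out Sigma_bounded)[M _ outS].
by exists M => t [_ tS]; rewrite leNgt; apply/negP => /ltW /outS.
Qed.

Lemma ellS_gt0 w : w != 0 -> 0 < ellS Sigma w.
Proof.
move=> w0; have [delta delta0 inS] := ray_near0 Sigma_open Sigma0 w.
have delta_ray : ray w delta by split; [exact: ltW | apply: inS; rewrite lexx ltW].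
exact: lt_le_trans delta0 (ub_le_sup (has_ubound_ray w0) delta_ray).
Qed.

Hypothesis Sigma_star : star_shaped0 Sigma.

Lemma star_shaped_rayP w t : w != 0 -> 0 <= t ->
  Sigma (t *: w) <-> t < ellS Sigma w.
Proof.
move=> w0 t0; split => [tS|lt_t_ell].
- have /nbhs_ballP[e /= e0 ballS] : nbhs t [set s : R | Sigma (s *: w)].
    by apply: open_nbhs_nbhs; split; [exact: open_ray|].
  have e2_gt0 : 0 < e / 2 by rewrite divr_gt0.
  have te_ray : ray w (t + e / 2).
    split; first by rewrite addr_ge0 ?(ltW e2_gt0).
    apply: ballS; rewrite -ball_normE /= opprD addrA subrr sub0r normrN.
    by rewrite ger0_norm ?ltW// ltr_pdivrMr// ltr_pMr// ltr1n.
  by apply: lt_le_trans (ub_le_sup (has_ubound_ray w0) te_ray); rewrite ltrDl.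
- have ray0 : ray w !=set0 by exists 0; split; rewrite ?scale0r.
  have [s [_ sS] lt_ts] := sup_gt ray0 lt_t_ell.
  have s_gt0 : 0 < s := le_lt_trans t0 lt_ts.
  rewrite -[t](divfK (lt0r_neq0 s_gt0)) -scalerA; apply: Sigma_star => //.
  by rewrite divr_ge0 ?(ltW s_gt0)//= ler_pdivrMr// mul1r (ltW lt_ts).
Qed.

Lemma RS_star_shaped w : w != 0 -> RS Sigma w = ln (ellS Sigma w).
Proof.
move=> w0; have ell0 := ellS_gt0 w0.
apply: (RS_approx_near_cst ell0 _).2 => e e0 e_lt.
rewrite /RS_approx trunc_intE.
rewrite (ge0_integral_itv_split e0 (ltW e_lt) (measurable_ray_integrand Sigma_open w));
  last exact: ray_integrand_ge0.
rewrite integral_ray_integrand_inside ?(ltW e_lt)//; last first.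
  by move=> t /andP[et t_lt]; apply/star_shaped_rayP; rewrite ?(ltW (lt_le_trans e0 et)).
rewrite integral_ray_integrand_outside ?adde0; last first.
  move=> t ell_t tS; have t0 := le_trans (ltW ell0) ell_t.
  by move: (star_shaped_rayP w0 t0).1 => /(_ tS); rewrite ltNge ell_t.
by rewrite -EFinD; congr EFin; ring.
Qed.

Lemma GS_star_shaped w : w != 0 ->
  GS Sigma w = (ln (ellS Sigma w) + ln (ellS Sigma (- w))) / 2.
Proof. by move=> w0; rewrite /GS !RS_star_shaped ?oppr_eq0. Qed.

End star_shaped.

Lemma enorm_gt0 (R : realType) (d : nat) (x : 'rV[R]_d) : (0 < enorm x) = (x != 0).
Proof.
rewrite /enorm sqrtr_gt0 lt_def sumr_ge0 ?andbT => [|i _]; last exact: sqr_ge0.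
rewrite psumr_eq0 => [|i _]; last exact: sqr_ge0.
congr (~~ _); apply/allP/eqP => [x_eq0|-> i _]; last by rewrite mxE expr0n eqxx.
apply/rowP => i; rewrite mxE; apply/eqP.
by rewrite -sqrf_eq0; move: (x_eq0 i (mem_index_enum i)).
Qed.

Unset Implicit Arguments.

Theorem mainTheorem4 (R : realType) (d : nat) (Sigma : set 'rV[R]_d) :
  open Sigma -> bounded_set Sigma -> Sigma 0 ->
  [/\ (forall x : 'rV[R]_d, x != 0 ->
         exists l : R, RS_approx Sigma x eps @[eps --> 0^'+] --> l%:E),
      (forall x : 'rV[R]_d, x != 0 ->
         GS Sigma x = GS Sigma ((enorm x)^-1 *: x) - ln (enorm x)) &
      (star_shaped0 Sigma ->
         forall w : 'rV[R]_d, enorm w = 1 ->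
           GS Sigma w = (ln (ellS Sigma w) + ln (ellS Sigma (- w))) / 2)].
Proof.
move=> Sigma_open Sigma_bounded Sigma0; split.
- exact: RS_approx_cvg.
- move=> x x0; have x_gt0 : 0 < enorm x by rewrite enorm_gt0.
  have xE : x = enorm x *: ((enorm x)^-1 *: x).
    by rewrite scalerA mulfV ?scale1r// gt_eqF.
  by rewrite {1}xE GS_dilation// scaler_eq0 invr_eq0 gt_eqF.
- move=> Sigma_star w w1; apply: GS_star_shaped => //.
  by rewrite -enorm_gt0 w1.
Qed.
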